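(* Let $(P,\leq,{}',0,1)$ be a generalized orthomodular poset and define $R(x,y):=LU(x',y)$ for all $x,y\in P$. Then $(P,\leq,{}',R,0,1)$ is a conditionally operator residuated poset satisfying operator divisibility. Explicitly, for all $x,y,z\in P$: (i) if $x'\leq y$ and $L(x,y)\subseteq L(z)$ then $L(x)\subseteq R(y,z)$; (ii) if $z\leq y$ and $L(x)\subseteq R(y,z)$ then $L(x,y)\subseteq L(z)$; (iii) $R(x,0)=L(x')$; (iv) $R(x'',x)=P$; and moreover $x\leq y$ implies $L(y,U(R(y,x)))=L(x)$.
   Context: For a poset $(P,\leq)$ and $A\subseteq P$: $L(A):=\{x\in P\mid x\leq a\text{ for all }a\in A\}$, $U(A):=\{x\in P\mid a\leq x\text{ for all }a\in A\}$. We write $L(a,b)$ for $L(\{a,b\})$, $L(a,B)$ for $L(\{a\}\cup B)$, $LU(A)$ for $L(U(A))$, $ULU(A)=U(L(U(A)))$, etc.; for $A\subseteq P$, $A':=\{x'\mid x\in A\}$. An orthoposet is a bounded poset $(P,\leq,{}',0,1)$ with a unary operation $'$ that is an antitone involution ($x''=x$, and $x\leq y\Rightarrow y'\leq x'$) and a complementation ($L(x,x')=\{0\}$, $U(x,x')=\{1\}$). A generalized orthomodular poset is an orthoposet satisfying: for all $x,y\in P$, $x\leq y$ implies $U(y)=U(x,L(x',y))$. A conditionally operator residuated poset is a tuple $(P,\leq,{}',R,0,1)$ where $(P,\leq,0,1)$ is a bounded poset, $'$ is an antitone unary operation, and $R:P^2\to 2^P$ satisfies (i)–(iv) above; it satisfies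 operator divisibility if $x\leq y$ implies $L(y,U(R(y,x)))=L(x)$. *)

Set Implicit Arguments.

Section Defs.
Variable T : Type.
Variable le : T -> T -> Prop.

Definition set_sub (A B : T -> Prop) : Prop := forall x, A x -> B x.
Definition set_eq (A B : T -> Prop) : Prop := forall x, A x <-> B x.
Definition set_full : T -> Prop := fun _ => True.
Definition set1 (a : T) : T -> Prop := fun x => x = a.
Definition set2 (a b : T) : T -> Prop := fun x => x = a \/ x = b.
Definition set1U (a : T) (B : T -> Prop) : T -> Prop := fun x => x = a \/ B x.

Definition Lc (A : T -> Prop) : T -> Prop := fun x => forall a, A a -> le x a.
Definition Uc (A : T -> Prop) : T -> Prop := fun x => forall a, A a -> le a x.

Definition is_poset : Prop :=
  (forall x, le x x) /\
  (forall x y, le x y -> le y x -> x = y) /\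
  (forall x y z, le x y -> le y z -> le x z).

Definition is_bounded_poset (zero one : T) : Prop :=
  is_poset /\ (forall x, le zero x) /\ (forall x, le x one).

Definition is_orthoposet (comp : T -> T) (zero one : T) : Prop :=
  is_bounded_poset zero one /\
  (forall x, comp (comp x) = x) /\
  (forall x y, le x y -> le (comp y) (comp x)) /\
  (forall x, set_eq (Lc (set2 x (comp x))) (set1 zero)) /\
  (forall x, set_eq (Uc (set2 x (comp x))) (set1 one)).

Definition is_gen_orthomodular_poset (comp : T -> T) (zero one : T) : Prop :=
  is_orthoposet comp zero one /\
  (forall x y, le x y ->
     set_eq (Uc (set1 y)) (Uc (set1U x (Lc (set2 (comp x) y))))).

Definition Rop (comp : T -> T) (x y : T) : T -> Prop :=
  Lc (Uc (set2 (comp x) y)).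

End Defs.

From Stdlib Require Import Setoid.

Set Implicit Arguments.

(* Every cone occurring in the statement is generated by one or
   two elements, so it is first unfolded into elementwise form; in particular
   w ∈ R(y,z) = LU(y',z) says that w lies below every common upper bound of
   y' and z.  The generalized orthomodular law is used only through the
   inclusion U(x, L(x',y)) ⊆ U(y) for x ≤ y, read as a rule for proving
   y ≤ u (lemma [gom_upper]).  Two consequences of it carry the theorem:
   - [upper_of_residual]: if y' ≤ x and L(x,y) ⊆ L(z), then x lies below every
     common upper bound of y' and z (this is residuation (i));
   - [R_below_projection]: if z ≤ y, w ≤ y and w ∈ LU(y',z), then w ≤ z,
     obtained by applying the law to y' ≤ z' and passing through '; this gives
     both (ii) and operator divisibility.
   Items (iii) and (iv) only need 0 ≤ x and U(x,x') = {1}. *)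

Section Cones.
Variable T : Type.
Variable le : T -> T -> Prop.

Lemma Lc_set1 (a w : T) : Lc le (set1 a) w <-> le w a.
Proof.
  split; intro H.
  - apply H; reflexivity.
  - intros b ->; exact H.
Qed.

Lemma Lc_set2 (a b w : T) : Lc le (set2 a b) w <-> le w a /\ le w b.
Proof.
  split; intro H.
  - split; apply H; unfold set2; auto.
  - intros c [-> | ->]; apply H.
Qed.

Lemma Uc_set2 (a b u : T) : Uc le (set2 a b) u <-> le a u /\ le b u.
Proof.
  split; intro H.
  - split; apply H; unfold set2; auto.
  - intros c [-> | ->]; apply H.
Qed.

Lemma Rop_iff (comp : T -> T) (y z w : T) :
  Rop le comp y z w <-> (forall u, le (comp y) u -> le z u -> le w u).
Proof.
  unfold Rop. split.
  - intros H u Hyu Hzu. apply H. apply Uc_set2. auto.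
  - intros H u Hu. apply Uc_set2 in Hu. apply H; apply Hu.
Qed.

End Cones.

Section GeneralizedOrthomodular.
Variable T : Type.
Variable le : T -> T -> Prop.
Variable comp : T -> T.
Hypothesis le_trans : forall x y z, le x y -> le y z -> le x z.
Hypothesis comp_invol : forall x, comp (comp x) = x.
Hypothesis comp_antitone : forall x y, le x y -> le (comp y) (comp x).
(* The half of the generalized orthomodular law that the proof uses. *)
Hypothesis gom_law : forall x y, le x y ->
  set_sub (Uc le (set1U x (Lc le (set2 (comp x) y)))) (Uc le (set1 y)).

Lemma comp_reflect (x y : T) : le (comp y) (comp x) -> le x y.
Proof.
  intro H. rewrite <- (comp_invol x), <- (comp_invol y).
  now apply comp_antitone.
Qed.

Lemma gom_upper (x y u : T) : le x y -> le x u ->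
  (forall v, le v (comp x) -> le v y -> le v u) -> le y u.
Proof.
  intros Hxy Hxu Hv.
  apply (gom_law Hxy); [| reflexivity].
  intros a [-> | Ha]; [exact Hxu |].
  apply Lc_set2 in Ha. apply Hv; apply Ha.
Qed.

Lemma upper_of_residual (x y z : T) : le (comp x) y ->
  (forall w, le w x -> le w y -> le w z) ->
  forall u, le (comp y) u -> le z u -> le x u.
Proof.
  intros Hxy Hsub u Hyu Hzu.
  assert (Hyx : le (comp y) x) by (apply comp_reflect; now rewrite comp_invol).
  apply (gom_upper Hyx Hyu).
  intros v Hvy Hvx. rewrite comp_invol in Hvy.
  apply le_trans with z; [apply Hsub |]; assumption.
Qed.

Lemma R_below_projection (y z w : T) : le z y -> le w y ->
  (forall u, le (comp y) u -> le z u -> le w u) -> le w z.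
Proof.
  intros Hzy Hwy Hw. apply comp_reflect.
  apply (gom_upper (comp_antitone Hzy)); [now apply comp_antitone |].
  intros v Hvy Hvz. rewrite comp_invol in Hvy.
  rewrite <- (comp_invol v). apply comp_antitone, Hw.
  - now apply comp_antitone.
  - apply comp_reflect. now rewrite comp_invol.
Qed.

Lemma residuation_i (x y z : T) : le (comp x) y ->
  set_sub (Lc le (set2 x y)) (Lc le (set1 z)) ->
  set_sub (Lc le (set1 x)) (Rop le comp y z).
Proof.
  intros Hxy Hsub w Hw. apply Lc_set1 in Hw.
  apply Rop_iff. intros u Hyu Hzu.
  apply le_trans with x; [exact Hw |].
  apply (upper_of_residual (z := z) Hxy); [| exact Hyu | exact Hzu].
  intros v Hvx Hvy. apply Lc_set1, Hsub, Lc_set2. auto.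
Qed.

Lemma residuation_ii (x y z : T) : le z y ->
  set_sub (Lc le (set1 x)) (Rop le comp y z) ->
  set_sub (Lc le (set2 x y)) (Lc le (set1 z)).
Proof.
  intros Hzy Hsub w Hw. apply Lc_set2 in Hw as [Hwx Hwy].
  apply Lc_set1, (R_below_projection Hzy Hwy), Rop_iff, Hsub, Lc_set1, Hwx.
Qed.

Lemma operator_divisibility (x y : T) : le x y ->
  set_eq (Lc le (set1U y (Uc le (Rop le comp y x)))) (Lc le (set1 x)).
Proof.
  intros Hxy w. rewrite Lc_set1.
  assert (Hx_R : Rop le comp y x x).
  { apply Rop_iff. auto. }
  split.
  - intro Hw. apply (R_below_projection Hxy); [apply Hw; now left |].
    intros u Hyu Hxu. apply Hw. right.
    intros v Hv. apply (proj1 (Rop_iff _ _ y x v) Hv); assumption.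
  - intros Hwx a [-> | Ha]; [now apply le_trans with x |].
    apply le_trans with x; [exact Hwx | exact (Ha x Hx_R)].
Qed.

End GeneralizedOrthomodular.

Section ResiduumBounds.
Variable T : Type.
Variable le : T -> T -> Prop.
Variable comp : T -> T.
Variables zero one : T.
Hypothesis le_refl : forall x, le x x.
Hypothesis le_trans : forall x y z, le x y -> le y z -> le x z.
Hypothesis le_zero : forall x, le zero x.
Hypothesis le_one : forall x, le x one.

Lemma R_zero (x : T) : set_eq (Rop le comp x zero) (Lc le (set1 (comp x))).
Proof.
  intro w. rewrite Rop_iff, Lc_set1. split.
  - intro Hw. apply Hw; auto.
  - intros Hw u Hu _. now apply le_trans with (comp x).
Qed.

(* (iv): since U(x,x') = {1}, R(x'',x) = LU(x',x) = L(1) = P. *)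
Lemma R_full (x : T) :
  comp (comp x) = x ->
  set_sub (Uc le (set2 x (comp x))) (set1 one) ->
  set_eq (Rop le comp (comp (comp x)) x) (@set_full T).
Proof.
  intros Hinv Hupper w. split; [intros _; exact I |].
  intros _. apply Rop_iff. rewrite Hinv. intros u Hxu Hu.
  replace u with one by (symmetry; apply Hupper, Uc_set2; auto).
  apply le_one.
Qed.

End ResiduumBounds.

Theorem mainTheorem1 (T : Type) (le : T -> T -> Prop) (comp : T -> T)
    (zero one : T) :
  is_gen_orthomodular_poset le comp zero one ->
  let R := Rop le comp in
  (* (i) *)
  (forall x y z, le (comp x) y ->
     set_sub (Lc le (set2 x y)) (Lc le (set1 z)) ->
     set_sub (Lc le (set1 x)) (R y z)) /\
  (* (ii) *)
  (forall x y z, le z y ->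
     set_sub (Lc le (set1 x)) (R y z) ->
     set_sub (Lc le (set2 x y)) (Lc le (set1 z))) /\
  (* (iii) *)
  (forall x, set_eq (R x zero) (Lc le (set1 (comp x)))) /\
  (* (iv) *)
  (forall x, set_eq (R (comp (comp x)) x) (@set_full T)) /\
  (* operator divisibility *)
  (forall x y, le x y ->
     set_eq (Lc le (set1U y (Uc le (R y x)))) (Lc le (set1 x))).
Proof.
  intros [[[[Hrefl [_ Htr]] [H0 H1]] [Hinv [Hanti [_ HU]]]] HG] R.
  assert (Hgom : forall x y, le x y ->
    set_sub (Uc le (set1U x (Lc le (set2 (comp x) y)))) (Uc le (set1 y)))
    by (intros x y Hxy u; apply (HG x y Hxy u)).
  unfold R. split; [| split; [| split; [| split]]].
  - intros x y z. apply (residuation_i comp Htr Hinv Hanti Hgom).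
  - intros x y z. apply (residuation_ii Hinv Hanti Hgom).
  - intro x. apply (R_zero le comp zero Hrefl Htr H0).
  - intro x. apply (R_full comp H1 (Hinv x)).
    intros u Hu. exact (proj1 (HU x u) Hu).
  - apply (operator_divisibility comp Htr Hinv Hanti Hgom).
Qed.
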